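(* Let $\boldsymbol\gamma\in(0,\infty)^B$ and parameters $0<\alpha<\beta$, $\kappa>0$, $a\in\mathbb R$ with $\kappa\log_2\alpha+a=\log_2(1+\alpha)$ and $\kappa(1+\alpha)\le\alpha$; define $I^{\rm ref}(\rho)=\log_2(1+\rho)$ for $0\le\rho\le\alpha$, $\kappa\log_2\rho+a$ for $\alpha<\rho\le\beta$, and $\kappa\log_2\beta+a$ for $\rho>\beta$. Let $0<R<\kappa\log_2\beta+a$. The problem \[ \text{minimize }\frac1B\sum_{b=1}^B\wp_b\quad\text{subject to}\quad\frac1B\sum_{b=1}^BI^{\rm ref}(\wp_b\gamma_b)\ge R,\ \wp_b\ge0, \] is solved by \[ \wp_b=\begin{cases}\beta/\gamma_b,&\eta\ge\frac{\beta}{\kappa\gamma_b},\\ \kappa\eta,&\frac{\alpha}{\kappa\gamma_b}<\eta<\frac{\beta}{\kappa\gamma_b},\\ \alpha/\gamma_b,&\frac{\alpha+1}{\gamma_b}\le\eta\le\frac{\alpha}{\kappa\gamma_b},\\ \eta-1/\gamma_b,&\frac1{\gamma_b}\le\eta<\frac{\alpha+1}{\gamma_b},\\ 0,&\text{otherwise},\end{cases} \] where $\eta$ is chosen such that $\sum_{b=1}^BI^{\rm ref}(\wp_b\gamma_b)=BR$.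
   Context: $I^{\rm ref}$ is a piecewise approximation (refined truncated water-filling) of a discrete-input mutual information curve; the condition $\kappa(1+\alpha)\le\alpha$ ensures that its slope does not increase at $\rho=\alpha$. *)

From Stdlib Require Import Reals Lra.
Open Scope R_scope.

Definition log2 (x : R) : R := ln x / ln 2.

Fixpoint rsum (n : nat) (f : nat -> R) : R :=
  match n with
  | O => 0
  | S m => rsum m f + f m
  end.

Definition Iref (alpha beta kappa a rho : R) : R :=
  if Rle_dec rho alpha then log2 (1 + rho)
  else if Rle_dec rho beta then kappa * log2 rho + a
  else kappa * log2 beta + a.

Definition wp_alloc (alpha beta kappa g eta : R) : R :=
  if Rle_dec (beta / (kappa * g)) eta then beta / g
  else if Rlt_dec (alpha / (kappa * g)) eta then kappa * eta
  else if Rle_dec ((alpha + 1) / g) eta then alpha / g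
  else if Rle_dec (1 / g) eta then eta - 1 / g
  else 0.

From Stdlib Require Import Reals Lra Lia Psatz.
Open Scope R_scope.

(* Let I = ln 2 * Iref be the reference curve measured in nats.  On [0, oo) it
   is concave: its slopes 1/(1+r) on [0, alpha], kappa/r on [alpha, beta] and 0
   beyond beta decrease, the junction at alpha being ordered by the hypothesis
   kappa (1 + alpha) <= alpha.  A block with gain g at water level eta only sees
   the normalized level t = eta * g: wp_alloc g eta * g = level_alloc t, and 1/t
   is a supergradient of I at level_alloc t (level_supergradient).  Hence block
   by block eta (I(p g) - I(wp g)) <= p - wp, and summing against the rate
   constraint shows that no feasible power vector uses less power
   (water_filling_optimal; this is Lagrangian duality with multiplier eta).
   The water level exists by the intermediate value theorem: level_alloc and
   Iref (on [0, oo)) are built from clamps, so the total rate is continuous in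
   eta; it is 0 at eta = 0 and B (kappa log2 beta + a) > B R for large eta. *)

Lemma rsum_ext (n : nat) (f g : nat -> R) :
  (forall b, (b < n)%nat -> f b = g b) -> rsum n f = rsum n g.
Proof.
  induction n as [|n IH]; intros H; simpl; [reflexivity|].
  rewrite IH by (intros; apply H; lia). rewrite H by lia. reflexivity.
Qed.

Lemma rsum_le (n : nat) (f g : nat -> R) :
  (forall b, (b < n)%nat -> f b <= g b) -> rsum n f <= rsum n g.
Proof.
  induction n as [|n IH]; intros H; simpl; [lra|].
  pose proof (IH (fun b Hb => H b ltac:(lia))). pose proof (H n ltac:(lia)). lra.
Qed.

Lemma rsum_const (n : nat) (c : R) : rsum n (fun _ => c) = INR n * c.
Proof.
  induction n as [|n IH]; cbn [rsum]; [simpl; ring|]. rewrite IH, S_INR. ring.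
Qed.

Lemma rsum_lin (n : nat) (f g : nat -> R) (c d : R) :
  rsum n (fun b => c * f b + d * g b) = c * rsum n f + d * rsum n g.
Proof. induction n as [|n IH]; simpl; [ring|]. rewrite IH. ring. Qed.

Lemma rsum_ge_term (n : nat) (f : nat -> R) (b : nat) :
  (forall i, (i < n)%nat -> 0 <= f i) -> (b < n)%nat -> f b <= rsum n f.
Proof.
  induction n as [|n IH]; intros H Hb; [lia|]. simpl.
  destruct (Nat.eq_dec b n) as [->|Hn].
  - assert (0 <= rsum n f).
    { rewrite <- (Rmult_0_r (INR n)), <- rsum_const.
      apply rsum_le. intros i Hi. apply H. lia. }
    lra.
  - pose proof (IH (fun i Hi => H i ltac:(lia)) ltac:(lia)).
    pose proof (H n ltac:(lia)). lra.
Qed.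

Lemma rsum_continuity (n : nat) (F : nat -> R -> R) :
  (forall b, continuity (F b)) -> continuity (fun x => rsum n (fun b => F b x)).
Proof.
  intros HF. induction n as [|n IH]; simpl.
  - apply continuity_const. intros ? ?. reflexivity.
  - exact (continuity_plus _ _ IH (HF n)).
Qed.

Lemma div_le_iff (x c t : R) : 0 < c -> (x / c <= t <-> x <= c * t).
Proof.
  intros Hc. assert (E : x = c * (x / c)) by (field; lra).
  split; intros H.
  - rewrite E. apply Rmult_le_compat_l; lra.
  - apply (Rmult_le_reg_l c); [exact Hc|]. rewrite <- E. exact H.
Qed.

Lemma div_lt_iff (x c t : R) : 0 < c -> (x / c < t <-> x < c * t).
Proof.
  intros Hc. assert (E : x = c * (x / c)) by (field; lra).
  split; intros H.
  - rewrite E. apply Rmult_lt_compat_l; lra.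
  - apply (Rmult_lt_reg_l c); [exact Hc|]. rewrite <- E. exact H.
Qed.

Lemma ln2_pos : 0 < ln 2.
Proof. rewrite <- ln_1. apply ln_increasing; lra. Qed.

Lemma ln_le_mono (x y : R) : 0 < x -> x <= y -> ln x <= ln y.
Proof.
  intros Hx [Hlt|Heq]; [left; apply ln_increasing; lra | rewrite Heq; lra].
Qed.

Lemma ln_tangent (y z : R) : 0 < y -> 0 < z -> z * (ln y - ln z) <= y - z.
Proof.
  intros Hy Hz.
  pose proof (exp_ineq1_le (ln (y / z))) as H.
  rewrite exp_ln in H by (apply Rdiv_lt_0_compat; lra).
  unfold Rdiv in H. rewrite ln_mult, ln_Rinv in H by (try apply Rinv_0_lt_compat; lra).
  assert (E : z * (y * / z) = y) by (field; lra).
  nra.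
Qed.

Lemma log2_continuity_pt (f : R -> R) (x : R) :
  continuity_pt f x -> 0 < f x -> continuity_pt (fun y => log2 (f y)) x.
Proof.
  intros Hf Hpos.
  assert (Hln : continuity_pt (fun y => ln (f y)) x).
  { exact (continuity_pt_comp f ln x Hf
      (derivable_continuous_pt ln (f x) (exist _ (/ f x) (derivable_pt_lim_ln (f x) Hpos)))). }
  exact (continuity_pt_mult _ (fun _ => / ln 2) x Hln
           (continuity_pt_const (fun _ => / ln 2) x (fun _ _ => eq_refl))).
Qed.

Definition clamp (lo hi x : R) : R := Rmax lo (Rmin hi x).

Lemma clamp_below (lo hi x : R) : lo <= hi -> x <= lo -> clamp lo hi x = lo.
Proof.
  intros Hlh Hx. unfold clamp. rewrite Rmin_right by lra. apply Rmax_left. lra.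
Qed.

Lemma clamp_inside (lo hi x : R) : lo <= x <= hi -> clamp lo hi x = x.
Proof.
  intros Hx. unfold clamp. rewrite Rmin_right by lra. apply Rmax_right. lra.
Qed.

Lemma clamp_above (lo hi x : R) : lo <= hi -> hi <= x -> clamp lo hi x = hi.
Proof.
  intros Hlh Hx. unfold clamp. rewrite Rmin_left by lra. apply Rmax_right. lra.
Qed.

Lemma clamp_ge_lo (lo hi x : R) : lo <= clamp lo hi x.
Proof. apply Rmax_l. Qed.

(* Rmax and Rmin are continuous, being (c + y +/- |y - c|) / 2. *)
Lemma Rmax_continuity (c : R) : continuity (Rmax c).
Proof.
  intros x. apply (continuity_pt_locally_ext (fun y => (c + y + Rabs (y - c)) / 2) _ 1);
    [lra| |reg].
  intros y _. unfold Rmax. destruct (Rle_dec c y).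
  - rewrite Rabs_pos_eq by lra. field.
  - rewrite Rabs_left by lra. field.
Qed.

Lemma Rmin_continuity (c : R) : continuity (Rmin c).
Proof.
  intros x. apply (continuity_pt_locally_ext (fun y => (c + y - Rabs (y - c)) / 2) _ 1);
    [lra| |reg].
  intros y _. unfold Rmin. destruct (Rle_dec c y).
  - rewrite Rabs_pos_eq by lra. field.
  - rewrite Rabs_left by lra. field.
Qed.

Lemma clamp_continuity (lo hi : R) : continuity (clamp lo hi).
Proof.
  intros x. exact (continuity_pt_comp (Rmin hi) (Rmax lo) x
                     (Rmin_continuity hi x) (Rmax_continuity lo _)).
Qed.

Definition supergradient (f : R -> R) (r0 s : R) : Prop :=
  forall r, 0 <= r -> f r <= f r0 + s * (r - r0).

Lemma supergradient_between (f : R -> R) (r0 s1 s2 s : R) :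
  supergradient f r0 s1 -> supergradient f r0 s2 -> s1 <= s <= s2 ->
  supergradient f r0 s.
Proof.
  intros H1 H2 Hs r Hr. specialize (H1 r Hr). specialize (H2 r Hr).
  destruct (Rle_dec r0 r).
  - assert (s1 * (r - r0) <= s * (r - r0)) by (apply Rmult_le_compat_r; lra). lra.
  - assert (s * (r - r0) >= s2 * (r - r0)) by nra. lra.
Qed.

Lemma supergradient_scaled (f : R -> R) (r0 t r : R) :
  0 < t -> supergradient f r0 (/ t) -> 0 <= r -> t * (f r - f r0) <= r - r0.
Proof.
  intros Ht H Hr. specialize (H r Hr).
  replace (r - r0) with (t * (/ t * (r - r0))) by (field; lra).
  apply Rmult_le_compat_l; lra.
Qed.

Section ReferenceCurve.

Variables alpha beta kappa a : R.
Hypothesis halpha : 0 < alpha.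
Hypothesis hab : alpha < beta.
Hypothesis hkappa : 0 < kappa.
Hypothesis hslope : kappa * (1 + alpha) <= alpha.
Hypothesis hcont : kappa * log2 alpha + a = log2 (1 + alpha).

Definition nat_rate (r : R) : R := ln 2 * Iref alpha beta kappa a r.

Lemma nat_rate_low (r : R) : r <= alpha -> nat_rate r = ln (1 + r).
Proof.
  intros Hr. pose proof ln2_pos. unfold nat_rate, Iref, log2.
  destruct (Rle_dec r alpha); [field; lra | lra].
Qed.

(* By hcont, the middle branch in nats continues the first one from alpha on. *)
Lemma nat_rate_mid (r : R) :
  alpha <= r <= beta -> nat_rate r = ln (1 + alpha) + kappa * (ln r - ln alpha).
Proof.
  intros Hr. pose proof ln2_pos.
  assert (Ha : a = log2 (1 + alpha) - kappa * log2 alpha) by lra.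
  unfold nat_rate, Iref. destruct (Rle_dec r alpha).
  - replace r with alpha by lra. unfold log2. field. lra.
  - destruct (Rle_dec r beta); [|lra]. rewrite Ha. unfold log2. field. lra.
Qed.

Lemma nat_rate_high (r : R) :
  beta <= r -> nat_rate r = ln (1 + alpha) + kappa * (ln beta - ln alpha).
Proof.
  intros Hr. destruct (Req_dec r beta) as [->|Hne]; [apply nat_rate_mid; lra|].
  rewrite <- (nat_rate_mid beta) by lra.
  unfold nat_rate, Iref. destruct (Rle_dec r alpha); [lra|].
  destruct (Rle_dec r beta); [lra|].
  destruct (Rle_dec beta alpha); [lra|]. destruct (Rle_dec beta beta); [reflexivity|lra].
Qed.

Lemma supergradient_mid (r0 : R) :
  alpha <= r0 <= beta -> supergradient nat_rate r0 (kappa / r0).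
Proof.
  intros Hr0 r Hr. rewrite (nat_rate_mid r0) by lra.
  assert (Hs : kappa / r0 * r0 = kappa) by (field; lra).
  assert (Hspos : 0 < kappa / r0) by (apply Rdiv_lt_0_compat; lra).
  assert (Hpiece : forall y, alpha <= y <= beta ->
            kappa * (ln y - ln r0) <= kappa / r0 * (y - r0)).
  { intros y Hy. pose proof (ln_tangent y r0 ltac:(lra) ltac:(lra)). nra. }
  destruct (Rle_dec r alpha) as [H1|H1].
  - rewrite nat_rate_low by lra.
    pose proof (ln_tangent (1 + r) (1 + alpha) ltac:(lra) ltac:(lra)) as Tlow.
    pose proof (Hpiece alpha ltac:(lra)) as Talpha.
    (* the slope of ln(1+r) at alpha dominates kappa/r0 since kappa(1+alpha) <= alpha <= r0 *)
    assert (Hcmp : kappa / r0 * (1 + alpha) <= 1).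
    { apply (Rmult_le_reg_l r0); [lra|]. nra. }
    assert ((1 + alpha) * (ln (1 + r) - ln (1 + alpha))
            <= (1 + alpha) * (kappa / r0 * (r - alpha))) by nra.
    assert (ln (1 + r) - ln (1 + alpha) <= kappa / r0 * (r - alpha))
      by (apply (Rmult_le_reg_l (1 + alpha)); lra).
    nra.
  - destruct (Rle_dec r beta) as [H2|H2].
    + rewrite nat_rate_mid by lra. pose proof (Hpiece r ltac:(lra)). lra.
    + rewrite nat_rate_high by lra. pose proof (Hpiece beta ltac:(lra)). nra.
Qed.

Lemma supergradient_low (u : R) :
  0 <= u <= alpha -> supergradient nat_rate u (/ (1 + u)).
Proof.
  intros Hu r Hr. rewrite (nat_rate_low u) by lra.
  assert (Hinv : / (1 + u) * (1 + u) = 1) by (field; lra).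
  assert (Hipos : 0 < / (1 + u)) by (apply Rinv_0_lt_compat; lra).
  pose proof (ln_tangent (1 + Rmin r alpha) (1 + u)) as T.
  destruct (Rle_dec r alpha) as [H1|H1].
  - rewrite nat_rate_low by lra. rewrite Rmin_left in T by lra.
    specialize (T ltac:(lra) ltac:(lra)). nra.
  - rewrite Rmin_right in T by lra. specialize (T ltac:(lra) ltac:(lra)).
    pose proof (supergradient_mid alpha ltac:(lra) r Hr) as Hmid.
    rewrite (nat_rate_low alpha) in Hmid by lra.
    (* beyond alpha the curve grows with slope at most kappa/alpha <= 1/(1+alpha) <= 1/(1+u) *)
    assert (Hcmp : kappa / alpha <= / (1 + u)).
    { apply (Rmult_le_reg_l (alpha * (1 + u))); [nra|].
      replace (alpha * (1 + u) * (kappa / alpha)) with (kappa * (1 + u)) by (field; lra).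
      replace (alpha * (1 + u) * / (1 + u)) with alpha by (field; lra). nra. }
    assert (kappa / alpha * (r - alpha) <= / (1 + u) * (r - alpha)) by nra.
    nra.
Qed.

Lemma supergradient_top : supergradient nat_rate beta 0.
Proof.
  intros r Hr. rewrite Rmult_0_l, Rplus_0_r, (nat_rate_high beta) by lra.
  destruct (Rle_dec r alpha) as [H1|H1].
  - rewrite nat_rate_low by lra.
    pose proof (ln_le_mono (1 + r) (1 + alpha) ltac:(lra) ltac:(lra)).
    pose proof (ln_le_mono alpha beta ltac:(lra) ltac:(lra)). nra.
  - destruct (Rle_dec r beta) as [H2|H2].
    + rewrite nat_rate_mid by lra.
      pose proof (ln_le_mono r beta ltac:(lra) ltac:(lra)). nra.
    + rewrite nat_rate_high by lra. lra.
Qed.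


Lemma nat_rate_nonneg (r : R) : 0 <= r -> 0 <= nat_rate r.
Proof.
  intros Hr. pose proof (ln_le_mono 1 (1 + alpha) ltac:(lra) ltac:(lra)).
  rewrite ln_1 in *.
  destruct (Rle_dec r alpha) as [H1|H1].
  - rewrite nat_rate_low by lra. rewrite <- ln_1. apply ln_le_mono; lra.
  - pose proof (supergradient_top r Hr).
    rewrite (nat_rate_high beta) in * by lra.
    destruct (Rle_dec r beta) as [H2|H2].
    + rewrite nat_rate_mid by lra. pose proof (ln_le_mono alpha r ltac:(lra) ltac:(lra)). nra.
    + rewrite nat_rate_high by lra. pose proof (ln_le_mono alpha beta ltac:(lra) ltac:(lra)). nra.
Qed.

(* The allocation (times gain) of a block at normalized water level t = eta * g;
   this is wp_alloc for a unit gain. *)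
Definition level_alloc (t : R) : R :=
  if Rle_dec (beta / kappa) t then beta
  else if Rlt_dec (alpha / kappa) t then kappa * t
  else if Rle_dec (alpha + 1) t then alpha
  else if Rle_dec 1 t then t - 1
  else 0.

Lemma wp_alloc_normalize (g eta : R) :
  0 < g -> wp_alloc alpha beta kappa g eta * g = level_alloc (eta * g).
Proof.
  intros Hg. unfold wp_alloc, level_alloc.
  assert (Hdiv : forall x, x / (kappa * g) = (x / kappa) / g) by (intros; field; lra).
  rewrite !Hdiv.
  destruct (Rle_dec (beta / kappa / g) eta) as [C1|C1];
    destruct (Rle_dec (beta / kappa) (eta * g)) as [D1|D1];
    rewrite div_le_iff in C1 by lra; try (exfalso; lra); [field; lra|].
  destruct (Rlt_dec (alpha / kappa / g) eta) as [C2|C2];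
    destruct (Rlt_dec (alpha / kappa) (eta * g)) as [D2|D2];
    rewrite div_lt_iff in C2 by lra; try (exfalso; lra); [ring|].
  destruct (Rle_dec ((alpha + 1) / g) eta) as [C3|C3];
    destruct (Rle_dec (alpha + 1) (eta * g)) as [D3|D3];
    rewrite div_le_iff in C3 by lra; try (exfalso; lra); [field; lra|].
  destruct (Rle_dec (1 / g) eta) as [C4|C4];
    destruct (Rle_dec 1 (eta * g)) as [D4|D4];
    rewrite div_le_iff in C4 by lra; try (exfalso; lra); field; lra.
Qed.

Lemma level_alloc_cases (t : R) :
  (beta <= kappa * t /\ 1 + alpha <= t /\ level_alloc t = beta) \/
  (alpha < kappa * t < beta /\ 1 + alpha <= t /\ level_alloc t = kappa * t) \/
  (1 + alpha <= t /\ kappa * t <= alpha /\ level_alloc t = alpha) \/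
  (1 <= t < 1 + alpha /\ kappa * t <= alpha /\ level_alloc t = t - 1) \/
  (t < 1 /\ kappa * t <= alpha /\ level_alloc t = 0).
Proof.
  unfold level_alloc.
  destruct (Rle_dec (beta / kappa) t) as [C1|C1]; rewrite div_le_iff in C1 by lra.
  { left. repeat split; nra. }
  destruct (Rlt_dec (alpha / kappa) t) as [C2|C2]; rewrite div_lt_iff in C2 by lra.
  { right; left. repeat split; nra. }
  destruct (Rle_dec (alpha + 1) t) as [C3|C3].
  { right; right; left. repeat split; lra. }
  destruct (Rle_dec 1 t) as [C4|C4].
  - right; right; right; left. repeat split; lra.
  - right; right; right; right. repeat split; lra.
Qed.

Lemma level_alloc_nonneg (t : R) : 0 <= level_alloc t.
Proof. destruct (level_alloc_cases t) as [H|[H|[H|[H|H]]]]; nra. Qed.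

Lemma level_alloc_idle (t : R) : t < 1 -> level_alloc t = 0.
Proof. intros Ht. destruct (level_alloc_cases t) as [H|[H|[H|[H|H]]]]; lra. Qed.

Lemma level_alloc_full (t : R) : beta <= kappa * t -> level_alloc t = beta.
Proof. intros Ht. destruct (level_alloc_cases t) as [H|[H|[H|[H|H]]]]; lra. Qed.

(* Key inequality: 1/t is a supergradient of the curve at level_alloc t, i.e. the
   allocation maximizes t * nat_rate r - r over r >= 0. *)
Lemma level_supergradient (t r : R) :
  0 <= t -> 0 <= r -> t * (nat_rate r - nat_rate (level_alloc t)) <= r - level_alloc t.
Proof.
  intros Ht Hr.
  destruct (level_alloc_cases t) as [[H1 [H2 ->]]|[[H1 [H2 ->]]|[[H1 [H2 ->]]|[[H1 [H2 ->]]|[H1 [H2 ->]]]]]].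
  - apply supergradient_scaled; [lra| |exact Hr].
    apply (supergradient_between _ _ 0 (kappa / beta)); [apply supergradient_top| |].
    + apply supergradient_mid; lra.
    + split; [left; apply Rinv_0_lt_compat; lra|].
      replace (kappa / beta) with (/ (beta / kappa)) by (field; lra).
      apply Rinv_le_contravar; [apply Rdiv_lt_0_compat; lra|].
      apply div_le_iff; lra.
  - apply supergradient_scaled; [lra| |exact Hr].
    replace (/ t) with (kappa / (kappa * t)) by (field; lra).
    apply supergradient_mid; lra.
  - apply supergradient_scaled; [lra| |exact Hr].
    apply (supergradient_between _ _ (kappa / alpha) (/ (1 + alpha))).
    + apply supergradient_mid; lra.
    + apply supergradient_low; lra.
    + split; [|apply Rinv_le_contravar; lra].
      replace (kappa / alpha) with (/ (alpha / kappa)) by (field; lra).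
      apply Rinv_le_contravar; [lra|].
      apply (Rmult_le_reg_l kappa); [lra|].
      replace (kappa * (alpha / kappa)) with alpha by (field; lra). lra.
  - apply supergradient_scaled; [lra| |exact Hr].
    replace (/ t) with (/ (1 + (t - 1))) by (f_equal; ring).
    apply supergradient_low; lra.
  - assert (Hzero : nat_rate 0 = 0)
      by (rewrite nat_rate_low, Rplus_0_r, ln_1 by lra; reflexivity).
    pose proof (supergradient_low 0 ltac:(lra) r Hr) as Hsg.
    rewrite Hzero, Rplus_0_r, Rinv_1 in Hsg. rewrite Hzero.
    pose proof (nat_rate_nonneg r Hr). nra.
Qed.

Lemma level_alloc_clamp (t : R) :
  level_alloc t = clamp 0 alpha (t - 1) + (clamp alpha beta (kappa * t) - alpha).
Proof.
  destruct (level_alloc_cases t) as [[H1 [H2 ->]]|[[H1 [H2 ->]]|[[H1 [H2 ->]]|[[H1 [H2 ->]]|[H1 [H2 ->]]]]]].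
  - rewrite clamp_above, clamp_above by lra. ring.
  - rewrite clamp_above, clamp_inside by lra. ring.
  - rewrite clamp_above, clamp_below by lra. ring.
  - rewrite clamp_inside, clamp_below by lra. ring.
  - rewrite clamp_below, clamp_below by lra. ring.
Qed.

Lemma level_alloc_continuity : continuity level_alloc.
Proof.
  intros x.
  apply (continuity_pt_locally_ext
           (fun t => clamp 0 alpha (t - 1) + (clamp alpha beta (kappa * t) - alpha)) _ 1);
    [lra | intros y _; symmetry; apply level_alloc_clamp |].
  apply continuity_pt_plus.
  - apply (continuity_pt_comp (fun t => t - 1) (clamp 0 alpha)); [reg | apply clamp_continuity].
  - apply continuity_pt_minus; [|reg].
    apply (continuity_pt_comp (fun t => kappa * t) (clamp alpha beta)); [reg | apply clamp_continuity].
Qed.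

Definition clamped_rate (r : R) : R :=
  log2 (1 + clamp 0 alpha r) + kappa * (log2 (clamp alpha beta r) - log2 alpha).

Lemma Iref_clamped (r : R) : 0 <= r -> Iref alpha beta kappa a r = clamped_rate r.
Proof.
  intros Hr. unfold clamped_rate, Iref.
  destruct (Rle_dec r alpha) as [H1|H1].
  - rewrite clamp_inside, clamp_below by lra. ring.
  - rewrite (clamp_above 0 alpha) by lra. destruct (Rle_dec r beta) as [H2|H2].
    + rewrite clamp_inside by lra. lra.
    + rewrite clamp_above by lra. lra.
Qed.

(* Logarithms of clamps bounded away from 0 are continuous. *)
Lemma clamped_rate_continuity : continuity clamped_rate.
Proof.
  intros x. unfold clamped_rate. apply continuity_pt_plus.
  - apply log2_continuity_pt; [|pose proof (clamp_ge_lo 0 alpha x); lra].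
    apply continuity_pt_plus; [reg | apply clamp_continuity].
  - apply continuity_pt_mult; [reg|]. apply continuity_pt_minus; [|reg].
    apply log2_continuity_pt; [apply clamp_continuity|].
    pose proof (clamp_ge_lo alpha beta x). lra.
Qed.

Lemma level_rate_continuity : continuity (fun t => Iref alpha beta kappa a (level_alloc t)).
Proof.
  intros x.
  apply (continuity_pt_locally_ext (fun t => clamped_rate (level_alloc t)) _ 1);
    [lra | intros y _; symmetry; apply Iref_clamped, level_alloc_nonneg |].
  exact (continuity_pt_comp level_alloc clamped_rate x
           (level_alloc_continuity x) (clamped_rate_continuity _)).
Qed.

Lemma wp_alloc_nonneg (g eta : R) : 0 < g -> 0 <= wp_alloc alpha beta kappa g eta.
Proof.
  intros Hg. pose proof (level_alloc_nonneg (eta * g)) as H.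
  rewrite <- wp_alloc_normalize in H by exact Hg. nra.
Qed.

(* Per-block Lagrangian inequality: with multiplier eta (per nat of rate), the
   water-filling power of a block is optimal against any power p >= 0. *)
Lemma wp_alloc_lagrangian (g eta p : R) :
  0 < g -> 0 <= eta -> 0 <= p ->
  eta * (nat_rate (p * g) - nat_rate (wp_alloc alpha beta kappa g eta * g))
    <= p - wp_alloc alpha beta kappa g eta.
Proof.
  intros Hg Heta Hp.
  pose proof (level_supergradient (eta * g) (p * g) ltac:(nra) ltac:(nra)) as H.
  rewrite <- wp_alloc_normalize in H by exact Hg.
  apply (Rmult_le_reg_l g); [exact Hg|]. nra.
Qed.

Section WaterFilling.

Variable B : nat.
Variable gamma : nat -> R.
Variable Rt : R.
Hypothesis hB : (0 < B)%nat.
Hypothesis hgamma : forall b, (b < B)%nat -> 0 < gamma b.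
Hypothesis hR0 : 0 < Rt.
Hypothesis hR1 : Rt < kappa * log2 beta + a.

Definition total_rate (eta : R) : R :=
  rsum B (fun b => Iref alpha beta kappa a
                     (wp_alloc alpha beta kappa (gamma b) eta * gamma b)).

Lemma total_rate_normalize (eta : R) :
  total_rate eta = rsum B (fun b => Iref alpha beta kappa a (level_alloc (eta * gamma b))).
Proof.
  apply rsum_ext. intros b Hb. rewrite wp_alloc_normalize by (apply hgamma; exact Hb).
  reflexivity.
Qed.

Lemma total_rate_nonpos_level (eta : R) : eta <= 0 -> total_rate eta = 0.
Proof.
  intros Heta. rewrite total_rate_normalize, <- (Rmult_0_r (INR B)), <- rsum_const.
  apply rsum_ext. intros b Hb. pose proof (hgamma b Hb).
  rewrite level_alloc_idle by nra. unfold Iref.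
  destruct (Rle_dec 0 alpha); [|lra]. unfold log2. rewrite Rplus_0_r, ln_1. field.
  pose proof ln2_pos. lra.
Qed.

(* The required water level exists, by the intermediate value theorem between
   eta = 0 (rate 0) and a level saturating every block (rate B times the top). *)
Lemma water_level_exists : exists eta, total_rate eta = INR B * Rt.
Proof.
  assert (HBpos : 0 < INR B) by (apply lt_0_INR; exact hB).
  set (level_of := fun b => beta / (kappa * gamma b)).
  assert (Hlevel : forall b, (b < B)%nat -> 0 <= level_of b).
  { intros b Hb. pose proof (hgamma b Hb). left. apply Rdiv_lt_0_compat; nra. }
  set (Y := 1 + rsum B level_of).
  assert (HY : 0 < Y).
  { pose proof (rsum_le B (fun _ => 0) level_of Hlevel) as H.
    rewrite rsum_const, Rmult_0_r in H. unfold Y. lra. }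
  assert (Htop : total_rate Y = INR B * (kappa * log2 beta + a)).
  { rewrite total_rate_normalize, <- rsum_const. apply rsum_ext. intros b Hb.
    pose proof (hgamma b Hb) as Hg. pose proof (rsum_ge_term B level_of b Hlevel Hb).
    rewrite level_alloc_full.
    - unfold Iref. destruct (Rle_dec beta alpha); [lra|].
      destruct (Rle_dec beta beta); [reflexivity|lra].
    - assert (Hle : level_of b <= Y) by (unfold Y; lra).
      unfold level_of in Hle. apply div_le_iff in Hle; [lra|nra]. }
  assert (Hcont : continuity (fun eta => total_rate eta - INR B * Rt)).
  { apply (continuity_minus _ (fun _ => INR B * Rt));
      [|apply continuity_const; intros ? ?; reflexivity].
    intros x. apply (continuity_pt_locally_ext
      (fun eta => rsum B (fun b => Iref alpha beta kappa a (level_alloc (eta * gamma b)))) _ 1);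
      [lra | intros y _; symmetry; apply total_rate_normalize |].
    apply (rsum_continuity B (fun b eta => Iref alpha beta kappa a (level_alloc (eta * gamma b)))).
    intros b y.
    exact (continuity_pt_comp (fun eta => eta * gamma b)
             (fun t => Iref alpha beta kappa a (level_alloc t)) y
             ltac:(reg) (level_rate_continuity _)). }
  destruct (IVT _ 0 Y Hcont HY) as [eta [_ Heta]].
  - rewrite total_rate_nonpos_level by lra. nra.
  - rewrite Htop. nra.
  - exists eta. lra.
Qed.

Lemma water_filling_optimal (eta : R) (p : nat -> R) :
  total_rate eta = INR B * Rt ->
  (forall b, (b < B)%nat -> 0 <= p b) ->
  / INR B * rsum B (fun b => Iref alpha beta kappa a (p b * gamma b)) >= Rt ->
  rsum B (fun b => wp_alloc alpha beta kappa (gamma b) eta) <= rsum B p.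
Proof.
  intros Heq Hp Hfeas.
  assert (HBpos : 0 < INR B) by (apply lt_0_INR; exact hB).
  pose proof ln2_pos.
  assert (Heta : 0 <= eta).
  { destruct (Rle_dec eta 0) as [Hn|Hn]; [|lra].
    rewrite total_rate_nonpos_level in Heq by exact Hn. nra. }
  set (Ip := rsum B (fun b => Iref alpha beta kappa a (p b * gamma b))) in *.
  assert (HIp : INR B * Rt <= Ip).
  { apply (Rmult_le_reg_l (/ INR B)); [apply Rinv_0_lt_compat; lra|].
    replace (/ INR B * (INR B * Rt)) with Rt by (field; lra). lra. }
  assert (Hsum : (eta * ln 2) * Ip + (- (eta * ln 2)) * total_rate eta
                 <= 1 * rsum B p + (-1) * rsum B (fun b => wp_alloc alpha beta kappa (gamma b) eta)).
  { unfold Ip, total_rate. rewrite <- !rsum_lin. apply rsum_le. intros b Hb.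
    pose proof (wp_alloc_lagrangian (gamma b) eta (p b) (hgamma b Hb) Heta (Hp b Hb)).
    unfold nat_rate in *. lra. }
  assert (0 <= eta * ln 2 * (Ip - total_rate eta)) by (apply Rmult_le_pos; nra).
  lra.
Qed.

End WaterFilling.
End ReferenceCurve.

Theorem theorem8 (B : nat) (gamma : nat -> R) (alpha beta kappa a Rt : R)
  (hB : (0 < B)%nat)
  (hgamma : forall b, (b < B)%nat -> 0 < gamma b)
  (halpha : 0 < alpha) (hab : alpha < beta) (hkappa : 0 < kappa)
  (hcont : kappa * log2 alpha + a = log2 (1 + alpha))
  (hslope : kappa * (1 + alpha) <= alpha)
  (hR0 : 0 < Rt) (hR1 : Rt < kappa * log2 beta + a) :
  (exists eta : R,
     rsum B (fun b => Iref alpha beta kappa a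
                        (wp_alloc alpha beta kappa (gamma b) eta * gamma b))
     = INR B * Rt)
  /\
  (forall eta : R,
     rsum B (fun b => Iref alpha beta kappa a
                        (wp_alloc alpha beta kappa (gamma b) eta * gamma b))
     = INR B * Rt ->
     (* the allocation is feasible *)
     ((forall b, (b < B)%nat -> 0 <= wp_alloc alpha beta kappa (gamma b) eta) /\
      / INR B * rsum B (fun b => Iref alpha beta kappa a
                        (wp_alloc alpha beta kappa (gamma b) eta * gamma b)) >= Rt)
     /\
     (* and optimal among all feasible allocations *)
     (forall p : nat -> R,
        (forall b, (b < B)%nat -> 0 <= p b) ->
        / INR B * rsum B (fun b => Iref alpha beta kappa a (p b * gamma b)) >= Rt ->
        / INR B * rsum B (fun b => wp_alloc alpha beta kappa (gamma b) eta)
        <= / INR B * rsum B p)).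
Proof.
  assert (HBpos : 0 < INR B) by (apply lt_0_INR; exact hB).
  split.
  - exact (water_level_exists alpha beta kappa a halpha hab hkappa hslope hcont
             B gamma Rt hB hgamma hR0 hR1).
  - intros eta Heq. split; [split|].
    + intros b Hb. exact (wp_alloc_nonneg alpha beta kappa halpha hab hkappa hslope
                            (gamma b) eta (hgamma b Hb)).
    + rewrite Heq. right. field. lra.
    + intros p Hp Hfeas.
      apply Rmult_le_compat_l; [left; apply Rinv_0_lt_compat; exact HBpos|].
      exact (water_filling_optimal alpha beta kappa a halpha hab hkappa hslope hcont
               B gamma Rt hB hgamma hR0 eta p Heq Hp Hfeas).
Qed.
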